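(* Let $V$ be a toroidal vertex algebra. If $(W,Y_W)$ is a module for $V^0$ viewed as a toroidal vertex algebra, then $(W,Y_W^0)$ is a module for $V^0$ viewed as a vertex algebra, where $Y_W^0(u,x_0)=Y_W(u;x_0,\mathbf{x})|_{\mathbf{x}=1}$ for $u\in V^0$. Conversely, if $(W,Y_W^0)$ is a module for $V^0$ viewed as a vertex algebra, then $(W,Y_W)$ is a module for $V^0$ viewed as a toroidal vertex algebra, where $$Y_W(u;x_0,\mathbf{x})=\sum_{\mathbf{m}\in\mathbb{Z}^r}Y_W^0(u_{-1,\mathbf{m}}\mathbf{1},x_0)\mathbf{x}^{-\mathbf{m}}\quad\text{for }u\in V^0.$$ Furthermore, the category of modules for $V^0$ viewed as a toroidal vertex algebra is naturally isomorphic to the category of modules for $V^0$ viewed as a vertex algebra.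
   Context: Fix a positive integer $r$. Write $\mathbf{x}=(x_1,\dots,x_r)$, $\mathbf{x}^{\mathbf{m}}=x_1^{m_1}\cdots x_r^{m_r}$ (similarly for other variables), $\mathbf{z}\mathbf{y}=(z_1y_1,\dots,z_ry_r)$. For a vector space $W$ put $\mathcal{E}(W,r)=\mathrm{Hom}(W,W[[x_1^{\pm1},\dots,x_r^{\pm1}]]((x_0)))$ and $\mathcal{E}(W)=\mathrm{Hom}(W,W((x_0)))$. A toroidal vertex algebra is a vector space $V$ with a linear map $Y(\cdot;x_0,\mathbf{x}):V\to\mathcal{E}(V,r)$, $v\mapsto\sum_{(m_0,\mathbf{m})\in\mathbb{Z}\times\mathbb{Z}^r}v_{m_0,\mathbf{m}}x_0^{-m_0-1}\mathbf{x}^{-\mathbf{m}}$, and a vector $\mathbf{1}$ with $Y(\mathbf{1};x_0,\mathbf{x})v=v$, $Y(v;x_0,\mathbf{x})\mathbf{1}\in V[[x_0,x_1^{\pm1},\dots,x_r^{\pm1}]]$ for all $v$, and the Jacobi identity $$z_0^{-1}\delta\!\left(\tfrac{x_0-y_0}{z_0}\right)Y(u;x_0,\mathbf{z}\mathbf{y})Y(v;y_0,\mathbf{y})-z_0^{-1}\delta\!\left(\tfrac{y_0-x_0}{-z_0}\right)Y(v;y_0,\mathbf{y})Y(u;x_0,\mathbf{z}\mathbf{y})=y_0^{-1}\delta\!\left(\tfrac{x_0-z_0}{y_0}\right)Y(Y(u;z_0,\mathbf{z})v;y_0,\mathbf{y})$$ for all $u,v$, where $Y(u;x_0,\mathbf{z}\mathbf{y})=\sum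 u_{m_0,\mathbf{m}}x_0^{-m_0-1}\mathbf{z}^{-\mathbf{m}}\mathbf{y}^{-\mathbf{m}}$. Modules over a toroidal vertex algebra: vector space $W$, linear $Y_W:V\to\mathcal{E}(W,r)$ with $Y_W(\mathbf{1};x_0,\mathbf{x})=1_W$ and the Jacobi identity with $Y_W$ in the three outer operator places; module homomorphisms are linear maps intertwining all $Y_W$. $V^0=\mathrm{span}\{v_{m_0,\mathbf{m}}\mathbf{1}\mid v\in V,(m_0,\mathbf{m})\in\mathbb{Z}\times\mathbb{Z}^r\}$ is a toroidal vertex subalgebra of $V$; for any module $(W,Y_W)$ of the toroidal vertex algebra $V^0$ and $u\in V^0$ one has $Y_W(u;x_0,\mathbf{x})\in\mathcal{E}(W)[x_1^{\pm1},\dots,x_r^{\pm1}]$, so the specialization $\mathbf{x}=1$ is defined; with $Y^0(v,x_0)=Y(v;x_0,\mathbf{x})|_{\mathbf{x}=1}$, $(V^0,Y^0,\mathbf{1})$ is a vertex algebra (''$V^0$ viewed as a vertex algebra''). *)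

From HB Require Import structures.
From mathcomp Require Import all_boot all_order all_algebra.
Set Implicit Arguments. Unset Strict Implicit. Unset Printing Implicit Defensive.
Import Order.TTheory GRing.Theory Num.Theory.
Local Open Scope ring_scope.

(* Generalized binomial coefficient  binom(l, i) = l(l-1)...(l-i+1)/i!
   for l : int, i : nat, as an integer:
   binom(n, i) = 'C(n, i) for n >= 0 and
   binom(-(n+1), i) = (-1)^i 'C(n+i, i). *)
Definition binz (l : int) (i : nat) : int :=
  match l with
  | Posz n => ('C(n, i))%:Z
  | Negz n => (-1) ^+ i * ('C(n + i, i))%:Z
  end.

Definition signz (l : int) : int := (-1) ^+ `|l|%N.

Section Defs.
Variables (K : fieldType) (r : nat).
Notation Zr := 'rV[int]_r.

(* Coefficient convention: a toroidal vertex operator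
     Y(v; x0, x) = sum_{(m0,m)} v_{m0,m} x0^{-m0-1} x^{-m}
   is encoded by  Y v m0 m : V -> V  (the operator v_{m0,m});
   a vertex operator  Y0(v, x0) = sum_n v_n x0^{-n-1}  by  Y0 v n. *)

Definition V0 (V : lmodType K) (Y : V -> int -> Zr -> V -> V) (one : V)
    (x : V) : Prop :=
  exists s : seq (K * V * int * Zr),
    x = \sum_(t <- s) t.1.1.1 *: Y t.1.1.2 t.1.2 t.2 one.

(* Module axioms for a toroidal vertex algebra (V,Y,1) restricted to the
   subspace P of V (P = V^0, or P = everything):  W with
   Y_W : P -> E(W, r).  The Jacobi identity is written coefficientwise:
   the coefficient of  x0^{-m-1} y0^{-n-1} z0^{-l-1} z^{-k} y^{-b}
   of the Jacobi identity is exactly the identity below; the infinite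
   sums over i >= 0 have finite support (by truncation), and are
   evaluated as  sum_{i<N}  for any N beyond the support. *)
Definition is_tmod (V : lmodType K) (P : V -> Prop)
    (Y : V -> int -> Zr -> V -> V) (one : V)
    (W : lmodType K) (YW : V -> int -> Zr -> W -> W) : Prop :=
  [/\
      (forall (a : K) u v, P u -> P v -> forall m0 m w,
          YW (a *: u + v) m0 m w = a *: YW u m0 m w + YW v m0 m w),
      (forall u, P u -> forall m0 m (a : K) w1 w2,
          YW u m0 m (a *: w1 + w2) = a *: YW u m0 m w1 + YW u m0 m w2),
      (forall u, P u -> forall w, exists N : int,
          forall m0 m, N <= m0 -> YW u m0 m w = 0),
      (forall m0 m w, YW one m0 m w = if (m0 == -1) && (m == 0) then w else 0)
    &
      (forall u v, P u -> P v -> forall (w : W) (l m n : int) (k b : Zr) (N : nat),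
        (forall i : nat, (N <= i)%N ->
            [/\ YW (Y u (l + i%:Z) k v) (m + n - i%:Z) b w *~ binz m i = 0,
                YW u (m + l - i%:Z) k (YW v (n + i%:Z) (b - k) w) *~ binz l i = 0
              & YW v (n + l - i%:Z) (b - k) (YW u (m + i%:Z) k w) *~ binz l i = 0])
        ->
        \sum_(i < N) YW (Y u (l + i%:Z) k v) (m + n - i%:Z) b w *~ binz m i =
        \sum_(i < N)
          ((YW u (m + l - i%:Z) k (YW v (n + i%:Z) (b - k) w)
            - YW v (n + l - i%:Z) (b - k) (YW u (m + i%:Z) k w) *~ signz l)
             *~ (signz i%:Z * binz l i)))].

Definition is_tva (V : lmodType K) (Y : V -> int -> Zr -> V -> V) (one : V)
  : Prop :=
  is_tmod (fun _ => True) Y one Y /\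
  (forall v m0 m, 0 <= m0 -> Y v m0 m one = 0).

Definition is_vmod (V : lmodType K) (P : V -> Prop)
    (Y0 : V -> int -> V -> V) (one : V)
    (W : lmodType K) (YW : V -> int -> W -> W) : Prop :=
  [/\ (forall (a : K) u v, P u -> P v -> forall n w,
          YW (a *: u + v) n w = a *: YW u n w + YW v n w),
      (forall u, P u -> forall n (a : K) w1 w2,
          YW u n (a *: w1 + w2) = a *: YW u n w1 + YW u n w2),
      (forall u, P u -> forall w, exists N : int,
          forall n, N <= n -> YW u n w = 0),
      (forall n w, YW one n w = if n == -1 then w else 0)
    & (forall u v, P u -> P v -> forall (w : W) (l m n : int) (N : nat),
        (forall i : nat, (N <= i)%N ->
            [/\ YW (Y0 u (l + i%:Z) v) (m + n - i%:Z) w *~ binz m i = 0,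
                YW u (m + l - i%:Z) (YW v (n + i%:Z) w) *~ binz l i = 0
              & YW v (n + l - i%:Z) (YW u (m + i%:Z) w) *~ binz l i = 0])
        ->
        \sum_(i < N) YW (Y0 u (l + i%:Z) v) (m + n - i%:Z) w *~ binz m i =
        \sum_(i < N)
          ((YW u (m + l - i%:Z) (YW v (n + i%:Z) w)
            - YW v (n + l - i%:Z) (YW u (m + i%:Z) w) *~ signz l)
             *~ (signz i%:Z * binz l i)))].

(* YW0 is the specialization x = 1 of YW on the subspace P, acting on the
   subset Q of W:  for u in P, Y_W(u; x0, x) restricted to Q is a Laurent
   polynomial in x (finite support s in Z^r), and
   Y_W^0(u, x0) = Y_W(u; x0, x)|_{x=1}, i.e.  u^0_n = sum_m u_{n,m}. *)
Definition specializes (V W : lmodType K) (P : V -> Prop) (Q : W -> Prop)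
    (YW : V -> int -> Zr -> W -> W) (YW0 : V -> int -> W -> W) : Prop :=
  forall u, P u -> exists s : seq Zr,
    [/\ uniq s,
        (forall m, m \notin s -> forall m0 w, Q w -> YW u m0 m w = 0)
      & (forall n w, Q w -> YW0 u n w = \sum_(m <- s) YW u n m w)].

Definition tmod_hom (V W1 W2 : lmodType K) (P : V -> Prop)
    (YW1 : V -> int -> Zr -> W1 -> W1) (YW2 : V -> int -> Zr -> W2 -> W2)
    (f : W1 -> W2) : Prop :=
  forall u, P u -> forall m0 m w, f (YW1 u m0 m w) = YW2 u m0 m (f w).

Definition vmod_hom (V W1 W2 : lmodType K) (P : V -> Prop)
    (YW1 : V -> int -> W1 -> W1) (YW2 : V -> int -> W2 -> W2)
    (f : W1 -> W2) : Prop :=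
  forall u, P u -> forall n w, f (YW1 u n w) = YW2 u n (f w).

(* Toroidal module structure obtained from a vertex-algebra module:
   Y_W(u; x0, x) = sum_m Y_W^0(u_{-1,m} 1, x0) x^{-m}. *)
Definition tmod_of_vmod (V W : lmodType K) (Y : V -> int -> Zr -> V -> V)
    (one : V) (YW0 : V -> int -> W -> W) : V -> int -> Zr -> W -> W :=
  fun u m0 m w => YW0 (Y u (-1) m one) m0 w.

End Defs.

(* Two instances of the Jacobi identity with the vacuum as one argument carry the proof:
   Y_W(u_{-1,k}1; x0, x) is the x^{-k} component of Y_W(u; x0, x), and u = sum_m u_{-1,m}1
   for u in V^0.  Hence a module for V^0 viewed as a toroidal vertex algebra is recovered
   from its specialization at x = 1 through Y_W(u)_{n,m} = Y_W^0(u_{-1,m}1)_n, and the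
   identity (u_{p,k}v)_{-1,b}1 = (u_{-1,k}1)^0_p (v_{-1,b-k}1) turns each toroidal Jacobi
   identity into a vertex-algebra one.  Conversely, the Jacobi identity for Y_W^0 is the sum
   of the toroidal Jacobi identities over the finitely many torus modes in the supports of
   u and v. *)

From HB Require Import structures.
From mathcomp Require Import all_boot all_order all_algebra.
From mathcomp Require Import zify.
From Stdlib Require Import ClassicalEpsilon.
Import Order.TTheory GRing.Theory Num.Theory.
Local Open Scope ring_scope.
Set Implicit Arguments. Unset Strict Implicit.

Lemma eq_big_uniq_supp (T : eqType) (M : nmodType) (f : T -> M) (s t : seq T) :
  uniq s -> uniq t -> (forall c, c \notin s -> f c = 0) ->
  (forall c, c \notin t -> f c = 0) ->
  \sum_(c <- s) f c = \sum_(c <- t) f c.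
Proof.
move=> us ut fs ft.
rewrite (bigID (mem t)) [RHS](bigID (mem s)) /=.
rewrite [X in _ + X]big1 => [|c /ft //]; rewrite [X in _ = _ + X]big1 => [|c /fs //].
rewrite !addr0 -big_filter -[RHS]big_filter; apply/perm_big/uniq_perm.
- exact: filter_uniq.
- exact: filter_uniq.
by move=> c; rewrite !mem_filter andbC.
Qed.

Lemma big_ord_widen0 (M : nmodType) (G : nat -> M) (N N' : nat) :
  (N <= N')%N -> (forall i, (N <= i)%N -> G i = 0) ->
  \sum_(i < N) G i = \sum_(i < N') G i.
Proof.
move=> leNN' G0; rewrite (big_ord_widen N' G leNN') [RHS](bigID (fun i : 'I_N' => i < N)%N).
by rewrite /= [X in _ = _ + X]big1 ?addr0 // => i; rewrite -leqNgt; apply: G0.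
Qed.

Lemma uniform_bound_seq (T : eqType) (s : seq T) (Q : T -> int -> Prop) :
  (forall x, exists N : int, forall n, N <= n -> Q x n) ->
  exists N : int, forall x, x \in s -> forall n, N <= n -> Q x n.
Proof.
move=> hQ; elim: s => [|x s [N IH]]; first by exists 0.
have [N1 h1] := hQ x.
exists ((absz N1)%:Z + (absz N)%:Z) => y; rewrite inE => /orP[/eqP -> | hy] n hn.
- by apply: h1; lia.
- by apply: IH => //; lia.
Qed.

Lemma binz_n0 l : binz l 0 = 1.
Proof. by case: l => n /=; rewrite ?bin0 ?expr0 ?mul1r. Qed.

(* At i = 0 the coercion [i%:Z] leaves [Posz 0], which [addr0] does not match syntactically. *)
Lemma addz0 (x : int) : x + Posz 0 = x. Proof. exact: addr0. Qed.
Lemma subz0 (x : int) : x - Posz 0 = x. Proof. exact: subr0. Qed.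

Lemma signz0 : signz (Posz 0) = 1. Proof. by []. Qed.

Lemma jacobi_term_vanish (M : zmodType) (A B : M) (s z c : int) :
  A *~ c = 0 -> B *~ c = 0 -> (A - B *~ s) *~ (z * c) = 0.
Proof.
by move=> A0 B0; rewrite mulrC mulrzA mulrzBl A0 -mulrzA mulrC mulrzA B0 mul0rz subrr mul0rz.
Qed.

Lemma sumrBz (M : zmodType) (I J : Type) (s : seq I) (t : seq J) (A B : I -> J -> M)
    (sg z : int) :
  \sum_(i <- s) \sum_(j <- t) (A i j - B i j *~ sg) *~ z =
  (\sum_(i <- s) \sum_(j <- t) A i j - (\sum_(i <- s) \sum_(j <- t) B i j) *~ sg) *~ z.
Proof.
rewrite mulrzBl !mulrz_suml -sumrB; apply: eq_bigr => i _.
by rewrite !mulrz_suml -sumrB; apply: eq_bigr => j _; rewrite mulrzBl.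
Qed.

Definition linear_on (R : pzRingType) (W1 W2 : lmodType R)
    (P : W1 -> Prop) (g : W1 -> W2) : Prop :=
  forall (a : R) x y, P x -> P y -> g (a *: x + y) = a *: g x + g y.

Section LinearOn.
Variables (R : pzRingType) (W1 W2 : lmodType R) (P : W1 -> Prop) (g : W1 -> W2).
Hypotheses (P0 : P 0) (lin_g : linear_on P g).

Lemma linear_on0 : g 0 = 0.
Proof.
have := lin_g 1 P0 P0; rewrite !scale1r addr0 => /esym/eqP.
by rewrite -subr_eq0 addrK => /eqP.
Qed.

Lemma linear_on_sum (I : Type) (s : seq I) (F : I -> W1) :
  (forall x y, P x -> P y -> P (x + y)) -> (forall i, P (F i)) ->
  g (\sum_(i <- s) F i) = \sum_(i <- s) g (F i).
Proof.
move=> PD PF; elim: s => [|i s IH]; first by rewrite !big_nil linear_on0.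
have PS : P (\sum_(j <- s) F j) by apply: big_ind.
by rewrite !big_cons -[F i]scale1r lin_g // !scale1r IH.
Qed.

End LinearOn.

Section SpanOfModes.
Variables (K : fieldType) (r : nat) (V : lmodType K).
Variables (Y : V -> int -> 'rV[int]_r -> V -> V) (one : V).
Local Notation inV0 := (V0 Y one).

Lemma V0_0 : inV0 0.
Proof. by exists [::]; rewrite big_nil. Qed.

Lemma V0_mode v p k : inV0 (Y v p k one).
Proof. by exists [:: (1, v, p, k)]; rewrite big_seq1 scale1r. Qed.

Lemma V0_add x y : inV0 x -> inV0 y -> inV0 (x + y).
Proof. by move=> [s1 ->] [s2 ->]; exists (s1 ++ s2); rewrite big_cat. Qed.

Lemma V0_scale (a : K) x : inV0 x -> inV0 (a *: x).
Proof.
move=> [s ->]; exists [seq (a * t.1.1.1, t.1.1.2, t.1.2, t.2) | t <- s].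
by rewrite big_map scaler_sumr; apply: eq_bigr => t _; rewrite scalerA.
Qed.

Lemma V0_lin (a : K) x y : inV0 x -> inV0 y -> inV0 (a *: x + y).
Proof. by move=> Vx Vy; apply: V0_add => //; apply: V0_scale. Qed.

Lemma V0_sub x y : inV0 x -> inV0 y -> inV0 (x - y).
Proof. by move=> Vx Vy; rewrite -scaleN1r addrC; apply: V0_lin. Qed.

Lemma V0_addl x y : inV0 (x + y) -> inV0 y -> inV0 x.
Proof. by move=> Vxy Vy; rewrite -(addrK y x); apply: V0_sub. Qed.

Lemma V0_mulz x (z : int) : inV0 x -> inV0 (x *~ z).
Proof. by move=> Vx; rewrite -scaler_int; apply: V0_scale. Qed.

Lemma V0_sum (I : Type) (s : seq I) (F : I -> V) :
  (forall i, inV0 (F i)) -> inV0 (\sum_(i <- s) F i).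
Proof. by move=> VF; apply: big_ind => //; [apply: V0_0 | apply: V0_add]. Qed.

End SpanOfModes.

Section ToroidalModule.
Variables (K : fieldType) (r : nat) (V : lmodType K) (P : V -> Prop).
Variables (Y : V -> int -> 'rV[int]_r -> V -> V) (one : V).
Variables (W : lmodType K) (YW : V -> int -> 'rV[int]_r -> W -> W).
Hypothesis modW : is_tmod P Y one YW.

Lemma tmod_op_linear u m0 m : P u -> linear_on (fun _ => True) (YW u m0 m).
Proof. by case: modW => _ linW _ _ _ Pu a x y _ _; apply: linW. Qed.

Lemma tmod_op0 u m0 m : P u -> YW u m0 m 0 = 0.
Proof. by move=> Pu; apply: linear_on0 I (tmod_op_linear m0 m Pu). Qed.

Lemma tmod_op_sum u m0 m (T : Type) (s : seq T) (F : T -> W) :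
  P u -> YW u m0 m (\sum_(i <- s) F i) = \sum_(i <- s) YW u m0 m (F i).
Proof.
by move=> Pu; apply: (linear_on_sum I (tmod_op_linear m0 m Pu)).
Qed.

Lemma tmod_opZ u m0 m (a : K) w : P u -> YW u m0 m (a *: w) = a *: YW u m0 m w.
Proof. by move=> Pu; rewrite -[a *: w]addr0 (tmod_op_linear m0 m Pu) // tmod_op0 ?addr0. Qed.

Lemma tmod_linear m0 m w : linear_on P (fun u => YW u m0 m w).
Proof. by case: modW => linY _ _ _ _ a x y Px Py; apply: linY. Qed.

Lemma tmod_0op m0 m w : P 0 -> YW 0 m0 m w = 0.
Proof. by move=> P0; apply: linear_on0 P0 (tmod_linear m0 m w). Qed.

(* [binz 0 i = 0] for [i > 0], so with m = 0 only one term survives on the left. *)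
Lemma tmod_jacobi_m0 u v w l n k b N :
  P u -> P v -> (0 < N)%N -> (forall i : nat, (N <= i)%N ->
    YW u (l - i%:Z) k (YW v (n + i%:Z) (b - k) w) *~ binz l i = 0 /\
    YW v (n + l - i%:Z) (b - k) (YW u i%:Z k w) *~ binz l i = 0) ->
  YW (Y u l k v) n b w =
    \sum_(i < N) ((YW u (l - i%:Z) k (YW v (n + i%:Z) (b - k) w)
                  - YW v (n + l - i%:Z) (b - k) (YW u i%:Z k w) *~ signz l)
                   *~ (signz i%:Z * binz l i)).
Proof.
case: modW => _ _ _ _ jacW Pu Pv; case: N => // N _ vanish.
have := jacW u v Pu Pv w l 0 n k b N.+1.
rewrite big_ord_recl big1 => [|i _]; last by rewrite lift0 mulr0z.
rewrite /= !add0r (addr0 l) (subr0 n) mulr1z addr0 => -> // i ltNi.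
by have [A0 B0] := vanish i ltNi; case: i ltNi A0 B0 => // i; rewrite mulr0z.
Qed.

Lemma tmod_mode_vanish u v k b p q w : P u -> P v ->
  (forall n x, YW v n (b - k) x = 0) -> YW (Y u p k v) q b w = 0.
Proof.
move=> Pu Pv v0; rewrite (tmod_jacobi_m0 (N := 1)) // => [|i _].
  by rewrite big1 // => i _; rewrite !v0 tmod_op0 // mul0rz subrr mul0rz.
by rewrite !v0 tmod_op0 // !mul0rz.
Qed.

Hypotheses (vacY : forall v m0 m, 0 <= m0 -> Y v m0 m one = 0) (P1 : P one) (P0 : P 0).

(* Jacobi identity for (u, 1) with l = n = -1 and m = q + 1: one term on each side. *)
Lemma tmod_vacuum_mode u k q b w : P u ->
  YW (Y u (-1) k one) q b w = if b == k then YW u q k w else 0.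
Proof.
have [_ _ _ oneW jacW] := modW; move=> Pu.
have := jacW u one Pu P1 w (-1) (q + 1) (-1) k b 1%N.
rewrite !big_ord1 !(addz0, subz0) addrK binz_n0 mulr1z mulr1 signz0 mulr1z.
rewrite !oneW eqxx /= subr_eq0 => -> => [|i lt0i]; last first.
  have oneW0 z x : z != -1 -> YW one z (b - k) x = 0 by rewrite oneW => /negbTE ->.
  rewrite vacY ?tmod_0op ?mul0rz //; last by lia.
  by rewrite !oneW0 ?tmod_op0 ?mul0rz //; apply/eqP; lia.
by case: eqP => _; rewrite ?tmod_op0 // mul0rz subr0.
Qed.

End ToroidalModule.

Lemma specializes_sum (K : fieldType) (r : nat) (V W : lmodType K) (P : V -> Prop)
    (YW : V -> int -> 'rV[int]_r -> W -> W) (YW0 : V -> int -> W -> W) :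
  specializes P (fun _ : W => True) YW YW0 ->
  forall u n w t, P u -> uniq t -> (forall c, c \notin t -> YW u n c w = 0) ->
  YW0 u n w = \sum_(c <- t) YW u n c w.
Proof.
move=> spW u n w t Pu ut t_supp; have [s [us s_supp ->]] := spW u Pu => //.
by apply: eq_big_uniq_supp => // c c_s; apply: s_supp.
Qed.

Lemma specializes_hom (K : fieldType) (r : nat) (V W1 W2 : lmodType K) (P : V -> Prop)
    (YW1 : V -> int -> 'rV[int]_r -> W1 -> W1) (YW2 : V -> int -> 'rV[int]_r -> W2 -> W2)
    (YW10 : V -> int -> W1 -> W1) (YW20 : V -> int -> W2 -> W2) (f : {linear W1 -> W2}) :
  specializes P (fun _ : W1 => True) YW1 YW10 ->
  specializes P (fun _ : W2 => True) YW2 YW20 ->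
  tmod_hom P YW1 YW2 f -> vmod_hom P YW10 YW20 f.
Proof.
move=> sp1 sp2 hom u Pu n w; have [s [us s_supp ->]] // := sp1 u Pu.
rewrite linear_sum (specializes_sum sp2 Pu us) => [|c c_s].
  by apply: eq_bigr => c _; apply: hom.
by rewrite -hom // s_supp ?linear0.
Qed.

Section ToroidalVertexAlgebra.
Variables (K : fieldType) (r : nat) (V : lmodType K).
Variables (Y : V -> int -> 'rV[int]_r -> V -> V) (one : V).
Variable Y0 : V -> int -> V -> V.
Hypothesis tvaV : is_tva Y one.
Hypothesis spV : specializes (V0 Y one) (V0 Y one) Y Y0.
Local Notation inV0 := (V0 Y one).

Let modV : is_tmod (fun _ => True) Y one Y := proj1 tvaV.
Let vacY : forall v m0 m, 0 <= m0 -> Y v m0 m one = 0 := proj2 tvaV.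

Lemma tva_op0 u p k : Y u p k 0 = 0.
Proof. exact: (tmod_op0 modV (u := u) p k I). Qed.

Lemma tva_vacuum_assoc u v l k b :
  Y (Y u l k v) (-1) b one = Y u l k (Y v (-1) (b - k) one).
Proof.
rewrite (tmod_jacobi_m0 modV (N := 1)) // => [|i lt0i].
  by rewrite big_ord1 !(addz0, subz0) binz_n0 signz0 (vacY u) // tva_op0 mul0rz subr0 mulr1z.
by rewrite !vacY ?tva_op0 ?mul0rz //; lia.
Qed.

Lemma V0_vacuum : inV0 one.
Proof.
by have [[_ _ _ oneV _] _] := tvaV; have := V0_mode Y one one (-1) 0; rewrite oneV !eqxx.
Qed.

(* Jacobi with m = 0 expresses u_{p,k} v_{q,j} 1 through (u_{p,k} v)_{q,j+k} 1 and terms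
   u_{p-i,k} v_{q+i,j} 1 with i > 0, which vanish once q + i >= 0: induction on |q|. *)
Lemma V0_mode_action u p k v q j : inV0 (Y u p k (Y v q j one)).
Proof.
have [d le_qd] : exists d, (absz q <= d)%N by exists (absz q).
elim: d q le_qd u p k v j => [|d IHd] q le_qd u p k v j.
  have -> : q = 0 by lia.
  by rewrite vacY // tva_op0; apply: V0_0.
have := tmod_jacobi_m0 modV (u := u) (v := v) (w := one) (l := p) (n := q) (k := k)
  (b := j + k) (N := (absz q).+1) I I isT.
rewrite addrK big_ord_recl !(addz0, subz0) binz_n0 signz0 (vacY u) // tva_op0.
rewrite mul0rz subr0 !mulr1z => E.
have := V0_mode Y one (Y u p k v) q (j + k).
rewrite E => [/V0_addl|i lt_qi]; last by rewrite !vacY ?tva_op0 ?mul0rz //; lia.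
apply; apply: V0_sum => i; apply: V0_mulz; rewrite (vacY u) // tva_op0 mul0rz subr0 lift0.
have [q_ge0 | q_lt0] := leP 0 (q + i.+1%:Z).
  by rewrite vacY // tva_op0; apply: V0_0.
by apply: IHd; have := ltn_ord i; lia.
Qed.

Lemma V0_stable u p k v : inV0 v -> inV0 (Y u p k v).
Proof.
move=> [s ->]; rewrite (tmod_op_sum modV (u := u)) //.
by apply: V0_sum => t; rewrite (tmod_opZ modV (u := u)) //; apply/V0_scale/V0_mode_action.
Qed.

Lemma tva_mode_vacuum_mode v p k m :
  Y (Y v p k one) (-1) m one = if m == k then Y v p k one else 0.
Proof.
have [[_ _ _ oneV _] _] := tvaV.
by rewrite tva_vacuum_assoc oneV eqxx /= subr_eq0; case: eqP; rewrite ?tva_op0.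
Qed.

Lemma V0_vacuum_decomp u : inV0 u -> exists s, [/\ uniq s,
  forall m, m \notin s -> Y u (-1) m one = 0 & u = \sum_(m <- s) Y u (-1) m one].
Proof.
move=> [s0 ->]; set ks := undup [seq t.2 | t <- s0].
have modes m : Y (\sum_(t <- s0) t.1.1.1 *: Y t.1.1.2 t.1.2 t.2 one) (-1) m one
    = \sum_(t <- s0) t.1.1.1 *: (if m == t.2 then Y t.1.1.2 t.1.2 t.2 one else 0).
  rewrite (linear_on_sum I (tmod_linear modV (-1) m one)) //.
  apply: eq_bigr => t _; rewrite -[_ *: _]addr0 (tmod_linear modV) //.
  by rewrite (tmod_0op modV) // addr0 tva_mode_vacuum_mode.
have ks_t t : t \in s0 -> t.2 \in ks by move=> s0t; rewrite mem_undup map_f.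
exists ks; split; first exact: undup_uniq.
  move=> m m_ks; rewrite modes big1_seq // => t /andP[_ /ks_t].
  by case: eqP => [<-|_]; rewrite ?(negbTE m_ks) ?scaler0.
rewrite [RHS](eq_bigr _ (fun m _ => modes m)) exchange_big /=.
apply: eq_big_seq => t /ks_t kt; rewrite -scaler_sumr; congr (_ *: _).
rewrite (eq_big_uniq_supp (undup_uniq _) (isT : uniq [:: t.2])) ?big_seq1 ?eqxx //.
- by move=> c c_ks; case: eqP => // ct; rewrite ct kt in c_ks.
- by move=> c; rewrite inE => /negbTE ->.
Qed.

Section ModuleOverV0.
Variables (W : lmodType K) (YW : V -> int -> 'rV[int]_r -> W -> W).
Hypothesis modW : is_tmod inV0 Y one YW.

Lemma tmodV0_vacuum_mode u k q b w : inV0 u ->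
  YW (Y u (-1) k one) q b w = if b == k then YW u q k w else 0.
Proof. exact: tmod_vacuum_mode modW vacY V0_vacuum (V0_0 Y one) u k q b w. Qed.

Lemma tmodV0_support u : inV0 u -> exists s, uniq s /\
  forall c, c \notin s -> forall m0 w, YW u m0 c w = 0.
Proof.
move=> Vu; have [s [us s_supp _]] := V0_vacuum_decomp Vu.
exists s; split=> // c c_s m0 w.
have := tmodV0_vacuum_mode c m0 c w Vu; rewrite eqxx => <-.
by rewrite s_supp // (tmod_0op modW) //; apply: V0_0.
Qed.

Lemma tmodV0_jacobi_eventually u v w l m n : inV0 u -> inV0 v ->
  exists N0 : nat, forall N k b, (N0 <= N)%N ->
    \sum_(i < N) YW (Y u (l + i%:Z) k v) (m + n - i%:Z) b w *~ binz m i =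
    \sum_(i < N) ((YW u (m + l - i%:Z) k (YW v (n + i%:Z) (b - k) w)
                   - YW v (n + l - i%:Z) (b - k) (YW u (m + i%:Z) k w) *~ signz l)
                    *~ (signz i%:Z * binz l i)).
Proof.
case: modV => _ _ truncV _ _; case: modW => _ _ truncW _ jacW Vu Vv.
have [Nu Nu_trunc] := truncV u I v.
have [Nv Nv_trunc] := truncW v Vv w; have [Nw Nw_trunc] := truncW u Vu w.
exists (absz (Nu - l) + absz (Nv - n) + absz (Nw - m))%N => N k b le_N0N.
apply: jacW => // i le_Ni; split.
- by rewrite Nu_trunc ?(tmod_0op modW) ?mul0rz //; [apply: V0_0 | lia].
- by rewrite Nv_trunc ?(tmod_op0 modW) ?mul0rz //; lia.
- by rewrite Nw_trunc ?(tmod_op0 modW) ?mul0rz //; lia.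
Qed.

Variable YW0 : V -> int -> W -> W.
Hypothesis spW : specializes inV0 (fun _ : W => True) YW YW0.

Lemma specializes_vacuum_mode u m0 m w : inV0 u ->
  YW0 (Y u (-1) m one) m0 w = YW u m0 m w.
Proof.
move=> Vu; rewrite (specializes_sum spW (t := [:: m]) (V0_mode _ _ _ _ _)) //.
  by rewrite big_seq1 tmodV0_vacuum_mode // eqxx.
by move=> c; rewrite inE tmodV0_vacuum_mode // => /negbTE ->.
Qed.

Lemma specializes_linear n w : linear_on inV0 (fun u => YW0 u n w).
Proof.
move=> a u v Vu Vv; have [su [usu su0 _]] := spW Vu; have [sv [usv sv0 _]] := spW Vv.
set t := undup (su ++ sv); have ut : uniq t := undup_uniq _.
have t_su c : c \notin t -> c \notin su /\ c \notin sv.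
  by rewrite mem_undup mem_cat negb_or => /andP.
rewrite (specializes_sum spW (V0_lin a Vu Vv) ut) => [|c /t_su[c_su c_sv]]; last first.
  by rewrite (tmod_linear modW) // su0 // sv0 // scaler0 addr0.
rewrite (specializes_sum spW Vu ut) => [|c /t_su[c_su _]]; last exact: su0.
rewrite (specializes_sum spW Vv ut) => [|c /t_su[_ c_sv]]; last exact: sv0.
by rewrite scaler_sumr -big_split; apply: eq_bigr => c _; apply: (tmod_linear modW).
Qed.

Lemma specializes_op_linear u n a w1 w2 : inV0 u ->
  YW0 u n (a *: w1 + w2) = a *: YW0 u n w1 + YW0 u n w2.
Proof.
move=> Vu; have [s [_ _ YW0_sum]] := spW Vu; rewrite !YW0_sum //.
by rewrite scaler_sumr -big_split; apply: eq_bigr => c _; apply: (tmod_op_linear modW).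
Qed.

Lemma specializes_truncation u w : inV0 u -> exists N : int, forall n, N <= n -> YW0 u n w = 0.
Proof.
case: modW => _ _ truncW _ _ Vu; have [N N_trunc] := truncW u Vu w.
exists N => n le_Nn; have [s [_ _ ->]] // := spW Vu.
by rewrite big1 // => c _; apply: N_trunc.
Qed.

Lemma specializes_vacuum n w : YW0 one n w = if n == -1 then w else 0.
Proof.
case: modW => _ _ _ oneW _.
rewrite (specializes_sum spW (t := [:: 0]) V0_vacuum) // ?big_seq1 ?oneW ?eqxx ?andbT //.
by move=> c; rewrite inE oneW => /negbTE ->; rewrite andbF.
Qed.

Lemma specializes_comp u v n n' w t1 t2 : inV0 u -> inV0 v -> uniq t1 -> uniq t2 ->
  (forall c, c \notin t1 -> forall m0 x, YW u m0 c x = 0) ->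
  (forall c, c \notin t2 -> forall m0 x, YW v m0 c x = 0) ->
  YW0 u n (YW0 v n' w) = \sum_(k <- t1) \sum_(c <- t2) YW u n k (YW v n' c w).
Proof.
move=> Vu Vv ut1 ut2 t1u t2v.
rewrite (specializes_sum spW Vu ut1) => [|c c_t1]; last exact: t1u.
apply: eq_bigr => k _; rewrite (specializes_sum spW Vv ut2) => [|c c_t2]; last exact: t2v.
exact: (tmod_op_sum modW).
Qed.

Lemma specializes_Y0 u v p q w t1 t2 : inV0 u -> inV0 v -> uniq t1 -> uniq t2 ->
  (forall k, k \notin t1 -> Y u p k v = 0) ->
  (forall c, c \notin t2 -> forall m0 x, YW v m0 c x = 0) ->
  YW0 (Y0 u p v) q w = \sum_(k <- t1) \sum_(c <- t2) YW (Y u p k v) q (c + k) w.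
Proof.
move=> Vu Vv ut1 ut2 t1u t2v; have [sV [usV sVu ->]] // := spV Vu.
rewrite (eq_big_uniq_supp usV ut1 (f := fun k => Y u p k v)) => [|k k_sV|k /t1u //];
  last by rewrite sVu.
rewrite (linear_on_sum (V0_0 Y one) (specializes_linear q w)) => [|x y|k]; last 2 first.
- exact: V0_add.
- exact: V0_stable.
apply: eq_bigr => k _.
rewrite (specializes_sum spW (V0_stable u p k Vv) (t := [seq c + k | c <- t2])) ?big_map //.
  by rewrite map_inj_uniq // => x y /addIr.
move=> b b_t2k; apply: (tmod_mode_vanish modW) => // n x; apply: t2v.
by apply: contra b_t2k => /(map_f (fun c => c + k)); rewrite subrK.
Qed.

Lemma specializes_jacobi u v w l m n N : inV0 u -> inV0 v ->
  (forall i : nat, (N <= i)%N ->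
    [/\ YW0 (Y0 u (l + i%:Z) v) (m + n - i%:Z) w *~ binz m i = 0,
        YW0 u (m + l - i%:Z) (YW0 v (n + i%:Z) w) *~ binz l i = 0
      & YW0 v (n + l - i%:Z) (YW0 u (m + i%:Z) w) *~ binz l i = 0]) ->
  \sum_(i < N) YW0 (Y0 u (l + i%:Z) v) (m + n - i%:Z) w *~ binz m i =
  \sum_(i < N) ((YW0 u (m + l - i%:Z) (YW0 v (n + i%:Z) w)
                 - YW0 v (n + l - i%:Z) (YW0 u (m + i%:Z) w) *~ signz l)
                  *~ (signz i%:Z * binz l i)).
Proof.
move=> Vu Vv vanish; have [N0 jacN0] := tmodV0_jacobi_eventually w l m n Vu Vv.
have [sV [usV sVu _]] := spV Vu.
have [su [usu suu]] := tmodV0_support Vu; have [sv [usv svv]] := tmodV0_support Vv.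
set t := undup (sV ++ su); have ut : uniq t := undup_uniq _.
have t_sV c : c \notin t -> c \notin sV /\ c \notin su.
  by rewrite mem_undup mem_cat negb_or => /andP.
have le_N : (N <= N + N0)%N by apply: leq_addr.
rewrite (big_ord_widen0 le_N
  (G := fun i => YW0 (Y0 u (l + i%:Z) v) (m + n - i%:Z) w *~ binz m i)) => [|i /vanish[]//].
rewrite [RHS](big_ord_widen0 le_N (G := fun i => (YW0 u (m + l - i%:Z) (YW0 v (n + i%:Z) w)
    - YW0 v (n + l - i%:Z) (YW0 u (m + i%:Z) w) *~ signz l) *~ (signz i%:Z * binz l i)))
  => [|i /vanish[_ A0 B0]]; last exact: jacobi_term_vanish.
under eq_bigr => i _.
  rewrite (specializes_Y0 _ _ Vu Vv ut usv) => [|k /t_sV[/sVu-> //]|c /svv //].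
  rewrite mulrz_suml; under eq_bigr do rewrite mulrz_suml.
  over.
under [RHS]eq_bigr => i _.
  rewrite (specializes_comp _ _ _ Vu Vv ut usv) => [|c /t_sV[_ /suu]|c /svv] //.
  rewrite (specializes_comp _ _ _ Vv Vu usv ut) => [|c /svv|c /t_sV[_ /suu]] //.
  rewrite [X in _ - X *~ _]exchange_big -sumrBz.
  over.
rewrite exchange_big [RHS]exchange_big; apply: eq_bigr => k _.
rewrite exchange_big [RHS]exchange_big; apply: eq_bigr => c _.
by have := jacN0 (N + N0)%N k (c + k) (leq_addl _ _); rewrite addrK.
Qed.

Lemma specializes_vmod : is_vmod inV0 Y0 one YW0.
Proof.
split=> [a u v Vu Vv n w| | | |]; first exact: specializes_linear.
- by move=> u Vu n a w1 w2; apply: specializes_op_linear.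
- by move=> u Vu w; apply: specializes_truncation.
- exact: specializes_vacuum.
- by move=> u v Vu Vv w l m n N; apply: specializes_jacobi.
Qed.

End ModuleOverV0.

Lemma tmodV0_specialization (W : lmodType K) (YW : V -> int -> 'rV[int]_r -> W -> W) :
  is_tmod inV0 Y one YW -> exists YW0, specializes inV0 (fun _ : W => True) YW YW0.
Proof.
move=> modW; pose supp u s := uniq s /\ forall c, c \notin s -> forall m0 w, YW u m0 c w = 0.
pose sel u := epsilon (inhabits [::]) (supp u).
exists (fun u n w => \sum_(c <- sel u) YW u n c w) => u Vu.
have [us s_supp] := epsilon_spec (inhabits [::]) (supp u) (tmodV0_support modW Vu).
by exists (sel u); split=> // c c_s m0 w _; apply: s_supp.
Qed.

Lemma Y0_vacuum_modes u v p k b :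
  Y (Y u p k v) (-1) b one = Y0 (Y u (-1) k one) p (Y v (-1) (b - k) one).
Proof.
rewrite tva_vacuum_assoc; have [s [us s_supp ->]] := spV (V0_mode Y one u (-1) k); last first.
  exact: V0_mode.
have vacuum_modeV j x : Y (Y u (-1) k one) p j x = if j == k then Y u p k x else 0.
  by rewrite (tmod_vacuum_mode modV vacY) //; case: eqP => // ->.
rewrite (eq_big_uniq_supp us (isT : uniq [:: k])) ?big_seq1 ?vacuum_modeV ?eqxx //.
- by move=> j j_s; apply: s_supp => //; apply: V0_mode.
- by move=> j; rewrite inE vacuum_modeV => /negbTE ->.
Qed.

Section ModuleFromVertexModule.
Variables (W : lmodType K) (YW0 : V -> int -> W -> W).
Hypothesis vmodW : is_vmod inV0 Y0 one YW0.
Local Notation YW := (tmod_of_vmod Y one YW0).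

Lemma vmod_linear n w : linear_on inV0 (fun u => YW0 u n w).
Proof. by case: vmodW => linW _ _ _ _ a x y Vx Vy; apply: linW. Qed.

Lemma vmod_0op n w : YW0 0 n w = 0.
Proof. exact: linear_on0 (V0_0 Y one) (vmod_linear n w). Qed.

Lemma tmod_of_vmod_truncation u w : inV0 u ->
  exists N : int, forall m0 m, N <= m0 -> YW u m0 m w = 0.
Proof.
case: vmodW => _ _ truncW _ _ Vu; have [s [_ s_supp _]] := spV Vu.
have [N N_trunc] := uniform_bound_seq s (fun m => truncW _ (V0_mode Y one u (-1) m) w).
exists N => m0 m le_Nm0; have [m_s | m_s] := boolP (m \in s); first exact: N_trunc.
by rewrite /tmod_of_vmod s_supp ?vmod_0op //; apply: V0_vacuum.
Qed.

Lemma tmod_of_vmod_tmod : is_tmod inV0 Y one YW.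
Proof.
have [linW opW _ oneW jacW] := vmodW; have [linV _ _ oneV _] := modV.
split; rewrite /tmod_of_vmod.
- by move=> a u v Vu Vv m0 m w; rewrite linV // linW //; apply: V0_mode.
- by move=> u Vu m0 m a w1 w2; apply/opW/V0_mode.
- by move=> u Vu w; apply: tmod_of_vmod_truncation.
- move=> m0 m w; rewrite oneV eqxx /=.
  by case: (m == 0); rewrite ?oneW ?vmod_0op ?andbT ?andbF.
move=> u v Vu Vv w l m n k b N vanish; under eq_bigr do rewrite Y0_vacuum_modes.
apply: jacW => [||i le_Ni]; [exact: V0_mode | exact: V0_mode |].
by have := vanish i le_Ni; rewrite /tmod_of_vmod !Y0_vacuum_modes.
Qed.

Lemma tmod_of_vmod_specializes : specializes inV0 (fun _ : W => True) YW YW0.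
Proof.
move=> u Vu; have [s [us s_supp u_sum]] := V0_vacuum_decomp Vu.
exists s; split=> // [m m_s m0 w _|n w _]; first by rewrite /tmod_of_vmod s_supp ?vmod_0op.
rewrite {1}u_sum (linear_on_sum (V0_0 Y one) (vmod_linear n w)) // => [x y|m].
- exact: V0_add.
- exact: V0_mode.
Qed.

End ModuleFromVertexModule.

Lemma vmod_hom_tmod (W1 W2 : lmodType K)
    (YW1 : V -> int -> 'rV[int]_r -> W1 -> W1) (YW2 : V -> int -> 'rV[int]_r -> W2 -> W2)
    (YW10 : V -> int -> W1 -> W1) (YW20 : V -> int -> W2 -> W2) (f : W1 -> W2) :
  is_tmod inV0 Y one YW1 -> is_tmod inV0 Y one YW2 ->
  specializes inV0 (fun _ : W1 => True) YW1 YW10 ->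
  specializes inV0 (fun _ : W2 => True) YW2 YW20 ->
  vmod_hom inV0 YW10 YW20 f -> tmod_hom inV0 YW1 YW2 f.
Proof.
move=> modW1 modW2 spW1 spW2 hom u Vu m0 m w.
rewrite -(specializes_vacuum_mode modW1 spW1) // hom; last exact: V0_mode.
exact: specializes_vacuum_mode.
Qed.

End ToroidalVertexAlgebra.

Unset Implicit Arguments.

Theorem theorem2p12 (K : fieldType) (r : nat) (V : lmodType K)
    (Y : V -> int -> 'rV[int]_r -> V -> V) (one : V)
    (Y0 : V -> int -> V -> V) :
  is_tva Y one ->
  specializes (V0 Y one) (V0 Y one) Y Y0 ->
  [/\
   (forall (W : lmodType K) (YW : V -> int -> 'rV[int]_r -> W -> W),
      is_tmod (V0 Y one) Y one YW ->
      (exists YW0, specializes (V0 Y one) (fun _ : W => True) YW YW0) /\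
      (forall YW0, specializes (V0 Y one) (fun _ : W => True) YW YW0 ->
         is_vmod (V0 Y one) Y0 one YW0 /\
         (forall u, V0 Y one u -> forall m0 m w,
            tmod_of_vmod Y one YW0 u m0 m w = YW u m0 m w))),
   (forall (W : lmodType K) (YW0 : V -> int -> W -> W),
      is_vmod (V0 Y one) Y0 one YW0 ->
      is_tmod (V0 Y one) Y one (tmod_of_vmod Y one YW0) /\
      specializes (V0 Y one) (fun _ : W => True) (tmod_of_vmod Y one YW0) YW0)
  & (forall (W1 W2 : lmodType K)
      (YW1 : V -> int -> 'rV[int]_r -> W1 -> W1)
      (YW2 : V -> int -> 'rV[int]_r -> W2 -> W2)
      (YW10 : V -> int -> W1 -> W1) (YW20 : V -> int -> W2 -> W2),
      is_tmod (V0 Y one) Y one YW1 -> is_tmod (V0 Y one) Y one YW2 ->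
      specializes (V0 Y one) (fun _ : W1 => True) YW1 YW10 ->
      specializes (V0 Y one) (fun _ : W2 => True) YW2 YW20 ->
      forall f : {linear W1 -> W2},
        tmod_hom (V0 Y one) YW1 YW2 f <-> vmod_hom (V0 Y one) YW10 YW20 f)].
Proof.
move=> tvaV spV; split.
- move=> W YW modW; split; first exact: (tmodV0_specialization tvaV modW).
  move=> YW0 spW; split; first exact: (specializes_vmod tvaV spV modW spW).
  move=> u Vu m0 m w; exact: (specializes_vacuum_mode tvaV modW spW m0 m w Vu).
- move=> W YW0 vmodW; split; first exact: (tmod_of_vmod_tmod tvaV spV vmodW).
  exact: (tmod_of_vmod_specializes tvaV vmodW).
- move=> W1 W2 YW1 YW2 YW10 YW20 modW1 modW2 spW1 spW2 f; split.
  + exact: (specializes_hom spW1 spW2).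
  + exact: (vmod_hom_tmod tvaV modW1 modW2 spW1 spW2).
Qed.
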